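(* Let $\mathcal{D}$ be a category containing all finite connected colimits. Then $\mathrm{Tw}(\mathcal{D})$ has all pushouts.
   Context: For a category $\mathcal{D}$, the Grothendieck twist $\mathrm{Tw}(\mathcal{D})$ is the category whose objects are finite families $\{a_i\}_{i\in I}$ ($I$ a finite set, each $a_i$ an object of $\mathcal{D}$), and whose morphisms $\{a_i\}_{i\in I}\to\{b_j\}_{j\in J}$ are pairs consisting of a function $f:I\to J$ and morphisms $F_i:a_i\to b_{f(i)}$ in $\mathcal{D}$ for all $i\in I$; composition composes set maps and components. *)

From Stdlib Require Import List Relations FunctionalExtensionality.
From Stdlib Require Fin.

Set Implicit Arguments.

(** Categories (hom-equality is Leibniz equality); [comp g f] is g ∘ f. *)
Record Category := {
  Ob :> Type;
  Hom : Ob -> Ob -> Type;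
  idm : forall a, Hom a a;
  comp : forall a b c, Hom b c -> Hom a b -> Hom a c;
  comp_id_l : forall a b (f : Hom a b), comp (idm b) f = f;
  comp_id_r : forall a b (f : Hom a b), comp f (idm a) = f;
  comp_assoc : forall a b c d (h : Hom c d) (g : Hom b c) (f : Hom a b),
      comp h (comp g f) = comp (comp h g) f
}.

Arguments Hom {C} _ _ : rename.
Arguments idm {C} _ : rename.
Arguments comp {C a b c} _ _ : rename.

Record Functor (J D : Category) := {
  fobj :> J -> D;
  fmap : forall a b, @Hom J a b -> @Hom D (fobj a) (fobj b);
  fmap_id : forall a, fmap a a (idm a) = idm (fobj a);
  fmap_comp : forall a b c (g : @Hom J b c) (f : @Hom J a b),
      fmap a c (comp g f) = comp (fmap b c g) (fmap a b f)
}.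
Arguments fmap {J D} f {a b} _ : rename.

Unset Implicit Arguments.

Definition finite_type (X : Type) : Prop := exists l : list X, forall x, In x l.

Definition finite_cat (J : Category) : Prop :=
  finite_type (Ob J) /\ forall a b : J, finite_type (@Hom J a b).

Definition connected_cat (J : Category) : Prop :=
  inhabited (Ob J) /\
  forall a b : J,
    clos_refl_sym_trans J (fun x y => inhabited (@Hom J x y)) a b.

Definition is_cocone {J D : Category} (F : Functor J D) (c : D)
  (leg : forall j : J, @Hom D (F j) c) : Prop :=
  forall (j k : J) (u : @Hom J j k), comp (leg k) (fmap F u) = leg j.

Definition is_colimit {J D : Category} (F : Functor J D) (c : D)
  (leg : forall j : J, @Hom D (F j) c) : Prop :=
  is_cocone F c leg /\
  forall (c' : D) (leg' : forall j : J, @Hom D (F j) c'),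
    is_cocone F c' leg' ->
    exists u : @Hom D c c',
      (forall j, comp u (leg j) = leg' j) /\
      (forall v : @Hom D c c', (forall j, comp v (leg j) = leg' j) -> v = u).

Definition has_colimit {J D : Category} (F : Functor J D) : Prop :=
  exists (c : D) (leg : forall j : J, @Hom D (F j) c), is_colimit F c leg.

Definition has_finite_connected_colimits (D : Category) : Prop :=
  forall J : Category, finite_cat J -> connected_cat J ->
    forall F : Functor J D, has_colimit F.

Definition is_pushout {C : Category} {a b c p : C}
  (f : @Hom C a b) (g : @Hom C a c) (i1 : @Hom C b p) (i2 : @Hom C c p) : Prop :=
  comp i1 f = comp i2 g /\
  forall (q : C) (j1 : @Hom C b q) (j2 : @Hom C c q),
    comp j1 f = comp j2 g ->
    exists u : @Hom C p q,
      (comp u i1 = j1 /\ comp u i2 = j2) /\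
      (forall v : @Hom C p q, comp v i1 = j1 -> comp v i2 = j2 -> v = u).

Definition has_pushouts (C : Category) : Prop :=
  forall (a b c : C) (f : @Hom C a b) (g : @Hom C a c),
    exists (p : C) (i1 : @Hom C b p) (i2 : @Hom C c p), is_pushout f g i1 i2.

(** The Grothendieck twist Tw(D).  A finite index set I is represented by
    Fin.t n (finite sets up to bijection). *)
Section Twist.
Variable D : Category.

Record TwOb := { tw_n : nat; tw_fam : Fin.t tw_n -> Ob D }.

Definition TwHom (X Y : TwOb) : Type :=
  { f : Fin.t (tw_n X) -> Fin.t (tw_n Y) &
    forall i, @Hom D (tw_fam X i) (tw_fam Y (f i)) }.

Definition tw_id (X : TwOb) : TwHom X X :=
  existT _ (fun i => i) (fun i => idm (tw_fam X i)).

Definition tw_comp {X Y Z : TwOb} (g : TwHom Y Z) (f : TwHom X Y) : TwHom X Z :=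
  existT _ (fun i => projT1 g (projT1 f i))
           (fun i => comp (projT2 g (projT1 f i)) (projT2 f i)).

Lemma tw_comp_id_l X Y (f : TwHom X Y) : tw_comp (tw_id Y) f = f.
Proof.
  destruct f as [f F]; unfold tw_comp, tw_id; simpl; f_equal.
  apply functional_extensionality_dep; intro i; apply comp_id_l.
Qed.

Lemma tw_comp_id_r X Y (f : TwHom X Y) : tw_comp f (tw_id X) = f.
Proof.
  destruct f as [f F]; unfold tw_comp, tw_id; simpl; f_equal.
  apply functional_extensionality_dep; intro i; apply comp_id_r.
Qed.

Lemma tw_comp_assoc X Y Z W (h : TwHom Z W) (g : TwHom Y Z) (f : TwHom X Y) :
  tw_comp h (tw_comp g f) = tw_comp (tw_comp h g) f.
Proof.
  unfold tw_comp; simpl; f_equal.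
  apply functional_extensionality_dep; intro i; apply comp_assoc.
Qed.

Definition Tw : Category :=
  {| Ob := TwOb; Hom := TwHom; idm := tw_id; comp := @tw_comp;
     comp_id_l := tw_comp_id_l; comp_id_r := tw_comp_id_r;
     comp_assoc := tw_comp_assoc |}.
End Twist.

From Stdlib Require Import List Relations.
From Stdlib Require Import FunctionalExtensionality ClassicalEpsilon ProofIrrelevance.
From Stdlib Require Fin.
Import ListNotations.

(* The index set of the pushout of [f : A -> B] and [g : A -> C] in Tw(D) is the pushout of
   finite sets, i.e. the quotient of I_A + I_B + I_C by the equivalence generated by
   [a ~ f a] and [a ~ g a].  Over each class the components of A, B, C together with the
   components of f and g form a finite connected (preorder-shaped) diagram in D, and its
   colimit is the component of the pushout at that class.  A cocone (j1, j2) into Q has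
   an index map constant on classes, hence restricts to a cocone on each class diagram;
   the universal properties of the class colimits then glue to the unique mediating map. *)

Lemma finite_type_fin (n : nat) : finite_type (Fin.t n).
Proof.
  induction n as [|n [l Hl]].
  - exists nil. intro x. inversion x.
  - exists (Fin.F1 :: map Fin.FS l). intro x.
    apply (Fin.caseS' x (fun x => In x (Fin.F1 :: map Fin.FS l))).
    + left; reflexivity.
    + intro p; right; apply in_map, Hl.
Qed.

Lemma finite_type_sum (X Y : Type) : finite_type X -> finite_type Y -> finite_type (X + Y).
Proof.
  intros [lX HX] [lY HY]. exists (map inl lX ++ map inr lY).
  intros [x|y]; apply in_app_iff; [left|right]; apply in_map; auto.
Qed.

Lemma finite_type_prop (P : Prop) : finite_type P.
Proof.
  destruct (excluded_middle_informative P) as [p|np].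
  - exists [p]. intro q. left. apply proof_irrelevance.
  - exists nil. intro q. contradiction.
Qed.

Lemma finite_type_sig (X : Type) (P : X -> Prop) : finite_type X -> finite_type {x | P x}.
Proof.
  intros [l Hl].
  assert (Hfilter : forall l0 : list X, exists l' : list {x | P x},
             forall x (p : P x), In x l0 -> In (exist P x p) l').
  { induction l0 as [|x l0 [l' Hl']].
    - exists nil. intros _ _ [].
    - destruct (excluded_middle_informative (P x)) as [px|npx].
      + exists (exist P x px :: l'). intros y py [<-|Hy].
        * left. f_equal. apply proof_irrelevance.
        * right. auto.
      + exists l'. intros y py [<-|Hy]; [contradiction|auto]. }
  destruct (Hfilter l) as [l' Hl']. exists l'. intros [x p]. auto.
Qed.

Section FiniteQuotient.
Variables (X : Type) (E : X -> X -> Prop).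
Hypothesis E_equiv : equivalence X E.

Definition classifies (l : list X) (m : nat) (cls : X -> Fin.t m) : Prop :=
  (forall x y, In x l -> In y l -> (cls x = cls y <-> E x y)) /\
  (forall k, exists x, In x l /\ cls x = k).

Lemma classifies_singleton (x0 : X) : classifies [x0] 1 (fun _ => Fin.F1).
Proof.
  destruct E_equiv as [Erefl _ _]. split.
  - intros x y [<-|[]] [<-|[]]. split; auto.
  - intro k. exists x0. split; [left; reflexivity|].
    apply (Fin.caseS' k (fun k => Fin.F1 = k)); [reflexivity|]. intro p; inversion p.
Qed.

Lemma classifies_cons_old (l : list X) (m : nat) (cls : X -> Fin.t m) (x y : X) :
  classifies l m cls -> In y l -> E x y ->
  classifies (x :: l) m
    (fun z => if excluded_middle_informative (E z x) then cls y else cls z).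
Proof.
  destruct E_equiv as [Er Et Es]. intros [Hc Hs] Hy Hxy.
  assert (Hrest : forall z, In z (x :: l) -> ~ E z x -> In z l)
    by (intros z [<-|Hz] Hn; [exfalso; apply Hn, Er | exact Hz]).
  split.
  - intros z1 z2 H1 H2.
    destruct (excluded_middle_informative (E z1 x)) as [e1|e1];
    destruct (excluded_middle_informative (E z2 x)) as [e2|e2].
    + split; eauto.
    + rewrite (Hc y z2 Hy (Hrest z2 H2 e2)). split; eauto.
    + rewrite (Hc z1 y (Hrest z1 H1 e1) Hy). split; eauto.
    + apply Hc; auto.
  - intro k. destruct (Hs k) as [z [Hz Hzk]]. exists z. split; [right; exact Hz|].
    destruct (excluded_middle_informative (E z x)) as [e|e]; [|exact Hzk].
    rewrite <- Hzk. apply Hc; eauto.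
Qed.

Lemma classifies_cons_new (l : list X) (m : nat) (cls : X -> Fin.t m) (x : X) :
  classifies l m cls -> (forall y, In y l -> ~ E x y) ->
  classifies (x :: l) (S m)
    (fun z => if excluded_middle_informative (E z x) then Fin.F1 else Fin.FS (cls z)).
Proof.
  destruct E_equiv as [Er Et Es]. intros [Hc Hs] Hnew.
  assert (Hrest : forall z, In z (x :: l) -> ~ E z x -> In z l)
    by (intros z [<-|Hz] Hn; [exfalso; apply Hn, Er | exact Hz]).
  split.
  - intros z1 z2 H1 H2.
    destruct (excluded_middle_informative (E z1 x)) as [e1|e1];
    destruct (excluded_middle_informative (E z2 x)) as [e2|e2].
    + split; eauto.
    + split; intro H; [discriminate H|]. exfalso; eauto.
    + split; intro H; [discriminate H|]. exfalso; eauto.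
    + rewrite <- (Hc z1 z2 (Hrest z1 H1 e1) (Hrest z2 H2 e2)).
      split; intro H; [apply Fin.FS_inj, H | f_equal; exact H].
  - intro k. apply (Fin.caseS' k).
    + exists x. split; [left; reflexivity|].
      destruct (excluded_middle_informative (E x x)) as [e|e]; [reflexivity|].
      exfalso; apply e, Er.
    + intro p. destruct (Hs p) as [z [Hz Hzp]]. exists z. split; [right; exact Hz|].
      destruct (excluded_middle_informative (E z x)) as [e|e].
      * exfalso. eapply Hnew; eauto.
      * rewrite Hzp; reflexivity.
Qed.

Lemma classifies_exists (x0 : X) (l : list X) :
  exists m cls, classifies (x0 :: l) m cls.
Proof.
  revert x0. induction l as [|x1 l IH]; intro x0.
  - exists 1, (fun _ => Fin.F1). apply classifies_singleton.
  - destruct (IH x1) as (m & cls & Hcls).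
    destruct (excluded_middle_informative (exists y, In y (x1 :: l) /\ E x0 y))
      as [[y [Hy Hxy]]|Hnew].
    + eexists; eexists. exact (classifies_cons_old _ _ _ _ _ Hcls Hy Hxy).
    + eexists; eexists. apply (classifies_cons_new _ _ _ _ Hcls).
      intros y Hy Hxy. apply Hnew. eauto.
Qed.

Lemma finite_quotient : finite_type X ->
  exists m (cls : X -> Fin.t m),
    (forall x y, cls x = cls y <-> E x y) /\ (forall k, exists x, cls x = k).
Proof.
  intros [[|x0 l] Hl].
  - exists 0, (fun x => match Hl x with end).
    split; [intro x; destruct (Hl x) | intro k; inversion k].
  - destruct (classifies_exists x0 l) as (m & cls & Hc & Hs).
    exists m, cls. split.
    + intros x y. apply Hc; apply Hl.
    + intro k. destruct (Hs k) as [x [_ Hx]]. eauto.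
Qed.

End FiniteQuotient.

Section Cast.
Context {C : Category} {I : Type} (T : I -> Ob C) (s : Ob C).

Definition hcast {k k' : I} (e : k = k') (h : @Hom C s (T k)) : @Hom C s (T k') :=
  match e in _ = k0 return @Hom C s (T k0) with eq_refl => h end.

Lemma hcast_pi (k k' : I) (e e' : k = k') (h : @Hom C s (T k)) : hcast e h = hcast e' h.
Proof. rewrite (proof_irrelevance _ e e'). reflexivity. Qed.

Lemma hcast_id (k : I) (e : k = k) (h : @Hom C s (T k)) : hcast e h = h.
Proof. exact (hcast_pi _ _ e eq_refl h). Qed.

Lemma hcast_hcast (k1 k2 k3 : I) (e1 : k1 = k2) (e2 : k2 = k3) (h : @Hom C s (T k1)) :
  hcast e2 (hcast e1 h) = hcast (eq_trans e1 e2) h.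
Proof. destruct e1, e2. reflexivity. Qed.

End Cast.

Lemma hcast_comp {C : Category} {I : Type} (T : I -> Ob C) (s s' : Ob C) (k k' : I)
  (e : k = k') (h : @Hom C s (T k)) (g : @Hom C s' s) :
  comp (hcast T s e h) g = hcast T s' e (comp h g).
Proof. destruct e. reflexivity. Qed.

Lemma tw_hom_ext (D : Category) (X Y : TwOb D) (h1 h2 : TwHom D X Y) :
  (forall i, projT1 h1 i = projT1 h2 i) ->
  (forall i (e : projT1 h1 i = projT1 h2 i),
      hcast (tw_fam D Y) (tw_fam D X i) e (projT2 h1 i) = projT2 h2 i) ->
  h1 = h2.
Proof.
  destruct h1 as [h1 F1], h2 as [h2 F2]; simpl. intros H1 H2.
  assert (h1 = h2) by (apply functional_extensionality; exact H1). subst h2.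
  f_equal. apply functional_extensionality_dep. intro i.
  exact (H2 i eq_refl).
Qed.

Lemma tw_hom_eq_component (D : Category) (X Y : TwOb D) (h1 h2 : TwHom D X Y)
  (H : h1 = h2) (i : Fin.t (tw_n D X)) :
  hcast (tw_fam D Y) (tw_fam D X i) (f_equal (fun h => projT1 h i) H) (projT2 h1 i)
  = projT2 h2 i.
Proof. destruct H. reflexivity. Qed.

Lemma colimits_choice {I : Type} {D : Category} (J : I -> Category)
  (F : forall i, Functor (J i) D) :
  (forall i, has_colimit (F i)) ->
  exists (c : I -> Ob D) (leg : forall i (j : J i), @Hom D (F i j) (c i)),
    forall i, is_colimit (F i) (c i) (leg i).
Proof.
  intro H.
  pose (sel i := constructive_indefinite_description _ (H i)).
  pose (sel' i := constructive_indefinite_description _ (proj2_sig (sel i))).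
  exists (fun i => proj1_sig (sel i)), (fun i => proj1_sig (sel' i)).
  intro i. exact (proj2_sig (sel' i)).
Qed.

Lemma cocone_legs_agree_back {J D : Category} (F : Functor J D) (c c' : Ob D)
  (leg : forall j : J, @Hom D (F j) c) (leg' : forall j : J, @Hom D (F j) c')
  (h : @Hom D c c') :
  is_cocone F c leg -> is_cocone F c' leg' ->
  forall (j k : J) (u : @Hom J j k), comp h (leg k) = leg' k -> comp h (leg j) = leg' j.
Proof.
  intros Hc Hc' j k u Hk.
  rewrite <- (Hc j k u), <- (Hc' j k u), comp_assoc, Hk. reflexivity.
Qed.

Section PreorderCat.
Variables (V : Type) (R : V -> V -> Prop).
Hypotheses (R_refl : forall x, R x x) (R_trans : forall x y z, R x y -> R y z -> R x z).

Definition preorder_cat : Category.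
Proof.
  refine {| Ob := V; Hom := R; idm := R_refl;
            comp := fun x y z q p => R_trans x y z p q |};
  intros; apply proof_irrelevance.
Defined.

Lemma preorder_cat_finite : finite_type V -> finite_cat preorder_cat.
Proof. intro HV. split; [exact HV | intros x y; exact (finite_type_prop (R x y))]. Qed.

Lemma preorder_cat_connected :
  inhabited V -> (forall x y, clos_refl_sym_trans V R x y) -> connected_cat preorder_cat.
Proof.
  intros Hinh Hconn. split; [exact Hinh|]. intros x y.
  induction (Hconn x y).
  - apply rst_step. constructor. assumption.
  - apply rst_refl.
  - apply rst_sym. assumption.
  - eapply rst_trans; eassumption.
Qed.

End PreorderCat.

Section Fibre.
Variables (V : Type) (R : V -> V -> Prop).
Hypotheses (R_refl : forall x, R x x) (R_trans : forall x y z, R x y -> R y z -> R x z).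
Variables (D : Category) (F : Functor (preorder_cat V R R_refl R_trans) D).
Variables (T : Type) (cls : V -> T) (K : T).

Definition fibre_rel (x y : {v | cls v = K}) : Prop := R (proj1_sig x) (proj1_sig y).

Definition fibre_cat : Category :=
  preorder_cat {v | cls v = K} fibre_rel (fun x => R_refl _) (fun x y z => R_trans _ _ _).

Definition fibre_diagram : Functor fibre_cat D.
Proof.
  refine {| fobj := fun x : fibre_cat => F (proj1_sig x);
            fmap := fun x y r => @fmap _ _ F (proj1_sig x) (proj1_sig y) r |}.
  - intro x. exact (fmap_id F (proj1_sig x)).
  - intros x y z r q. exact (fmap_comp F _ _ _ r q).
Defined.

Lemma fibre_cat_finite : finite_type V -> finite_cat fibre_cat.
Proof. intro HV. apply preorder_cat_finite, finite_type_sig, HV. Qed.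

Lemma fibre_cat_connected :
  (forall v w, cls v = cls w <-> clos_refl_sym_trans V R v w) ->
  (exists v, cls v = K) -> connected_cat fibre_cat.
Proof.
  intros Hcls [v0 p0]. apply preorder_cat_connected; [constructor; exact (exist _ v0 p0)|].
  intros [v pv] [w pw].
  assert (Hvw : clos_refl_sym_trans V R v w) by (apply Hcls; congruence).
  revert pv pw. induction Hvw as [x y r|x|x y _ IH|x y z Hxy IH1 _ IH2]; intros pv pw.
  - apply rst_step. exact r.
  - rewrite (proof_irrelevance _ pv pw). apply rst_refl.
  - apply rst_sym, IH.
  - assert (py : cls y = K) by (rewrite <- pv; symmetry; apply Hcls, Hxy).
    apply rst_trans with (exist _ y py); [apply IH1 | apply IH2].
Qed.

End Fibre.

Section SpanDiagram.
Variables (D : Category) (A B C : TwOb D) (f : TwHom D A B) (g : TwHom D A C).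

Definition span_index : Type :=
  (Fin.t (tw_n D A) + (Fin.t (tw_n D B) + Fin.t (tw_n D C)))%type.

Definition span_rel (x y : span_index) : Prop :=
  match x, y with
  | inl a, inl a' => a = a'
  | inl a, inr (inl b) => projT1 f a = b
  | inl a, inr (inr c) => projT1 g a = c
  | inr (inl b), inr (inl b') => b = b'
  | inr (inr c), inr (inr c') => c = c'
  | _, _ => False
  end.

Lemma span_rel_refl (x : span_index) : span_rel x x.
Proof. destruct x as [a|[b|c]]; reflexivity. Qed.

Lemma span_rel_trans (x y z : span_index) : span_rel x y -> span_rel y z -> span_rel x z.
Proof.
  destruct x as [a|[b|c]], y as [a'|[b'|c']], z as [a''|[b''|c'']]; simpl;
  intros; subst; try contradiction; reflexivity.
Qed.

Definition span_obj (x : span_index) : Ob D :=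
  match x with
  | inl a => tw_fam D A a
  | inr (inl b) => tw_fam D B b
  | inr (inr c) => tw_fam D C c
  end.

Definition span_map (x y : span_index) : span_rel x y -> @Hom D (span_obj x) (span_obj y) :=
  match x, y return span_rel x y -> @Hom D (span_obj x) (span_obj y) with
  | inl a, inl _ => fun p => hcast (tw_fam D A) _ p (idm _)
  | inl a, inr (inl _) => fun p => hcast (tw_fam D B) _ p (projT2 f a)
  | inl a, inr (inr _) => fun p => hcast (tw_fam D C) _ p (projT2 g a)
  | inr (inl b), inr (inl _) => fun p => hcast (tw_fam D B) _ p (idm _)
  | inr (inr c), inr (inr _) => fun p => hcast (tw_fam D C) _ p (idm _)
  | _, _ => fun p => match p with end
  end.

Lemma span_map_id (x : span_index) (p : span_rel x x) : span_map x x p = idm (span_obj x).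
Proof.
  destruct x as [a|[b|c]]; simpl in p; rewrite (proof_irrelevance _ p eq_refl); reflexivity.
Qed.

Lemma span_map_comp (x y z : span_index) (p : span_rel x y) (q : span_rel y z)
  (t : span_rel x z) :
  span_map x z t = comp (span_map y z q) (span_map x y p).
Proof.
  destruct x as [a|[b|c]], y as [a'|[b'|c']], z as [a''|[b''|c'']]; simpl in p, q, t;
  try contradiction; subst; rewrite (proof_irrelevance _ t eq_refl); simpl;
  symmetry; first [apply comp_id_l | apply comp_id_r].
Qed.

Definition span_diagram :
  Functor (preorder_cat span_index span_rel span_rel_refl span_rel_trans) D.
Proof.
  refine {| fobj := span_obj : preorder_cat _ _ _ _ -> D; fmap := span_map |}.
  - intro x. apply span_map_id.
  - intros x y z q p. apply span_map_comp.
Defined.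

Lemma span_index_finite : finite_type span_index.
Proof. repeat apply finite_type_sum; apply finite_type_fin. Qed.

End SpanDiagram.

Section Pushout.
Variables (D : Category) (A B C : TwOb D) (f : TwHom D A B) (g : TwHom D A C).

Local Notation V := (span_index D A B C).
Local Notation R := (span_rel D A B C f g).
Local Notation span_map := (span_map D A B C f g).
Local Notation span_obj := (span_obj D A B C).

Variables (m : nat) (cls : V -> Fin.t m).
Hypothesis cls_kernel : forall v w, cls v = cls w <-> clos_refl_sym_trans V R v w.
Hypothesis cls_surjective : forall K, exists v, cls v = K.

Local Notation fibre K :=
  (fibre_cat V R (span_rel_refl D A B C f g) (span_rel_trans D A B C f g) _ cls K).
Local Notation diagram K :=
  (fibre_diagram V R _ _ D (span_diagram D A B C f g) _ cls K).

Variables (cobj : Fin.t m -> Ob D)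
  (cleg : forall (K : Fin.t m) (j : fibre K), @Hom D (diagram K j) (cobj K)).
Hypothesis cleg_colimit : forall K, is_colimit (diagram K) (cobj K) (cleg K).

Definition class_leg (v : V) : @Hom D (span_obj v) (cobj (cls v)) :=
  cleg (cls v) (exist _ v eq_refl).

Lemma cls_rel (v w : V) : R v w -> cls v = cls w.
Proof. intro r. apply cls_kernel, rst_step, r. Qed.

Lemma class_leg_natural (v w : V) (r : R v w) :
  comp (class_leg w) (span_map v w r) = hcast cobj (span_obj v) (cls_rel v w r) (class_leg v).
Proof.
  transitivity (cleg (cls w) (exist _ v (cls_rel v w r))).
  - exact (proj1 (cleg_colimit (cls w)) (exist _ v _) (exist _ w eq_refl) r).
  - unfold class_leg. destruct (cls_rel v w r). reflexivity.
Qed.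

Definition pushout_ob : TwOb D := {| tw_n := m; tw_fam := cobj |}.

Definition pushout_inl : TwHom D B pushout_ob :=
  existT _ (fun b => cls (inr (inl b))) (fun b => class_leg (inr (inl b))).

Definition pushout_inr : TwHom D C pushout_ob :=
  existT _ (fun c => cls (inr (inr c))) (fun c => class_leg (inr (inr c))).

Lemma pushout_comm : tw_comp D pushout_inl f = tw_comp D pushout_inr g.
Proof.
  apply tw_hom_ext; simpl.
  - intro a. rewrite <- (cls_rel (inl a) (inr (inl (projT1 f a))) eq_refl).
    exact (cls_rel (inl a) (inr (inr (projT1 g a))) eq_refl).
  - intros a e.
    etransitivity;
      [apply f_equal, (class_leg_natural (inl a) (inr (inl (projT1 f a))) eq_refl)|].
    etransitivity;
      [|symmetry; apply (class_leg_natural (inl a) (inr (inr (projT1 g a))) eq_refl)].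
    rewrite hcast_hcast. apply hcast_pi.
Qed.

Section Universal.
Variables (Q : TwOb D) (j1 : TwHom D B Q) (j2 : TwHom D C Q).
Hypothesis j_comm : tw_comp D j1 f = tw_comp D j2 g.

Definition span_cocone_index (v : V) : Fin.t (tw_n D Q) :=
  match v with
  | inl a => projT1 j1 (projT1 f a)
  | inr (inl b) => projT1 j1 b
  | inr (inr c) => projT1 j2 c
  end.

Definition span_cocone_mor (v : V) : @Hom D (span_obj v) (tw_fam D Q (span_cocone_index v)) :=
  match v with
  | inl a => comp (projT2 j1 (projT1 f a)) (projT2 f a)
  | inr (inl b) => projT2 j1 b
  | inr (inr c) => projT2 j2 c
  end.

Lemma span_cocone_index_rel (v w : V) : R v w -> span_cocone_index v = span_cocone_index w.
Proof.
  destruct v as [a|[b|c]], w as [a'|[b'|c']]; simpl; intros; subst;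
  try contradiction; try reflexivity.
  exact (f_equal (fun h => projT1 h a) j_comm).
Qed.

Lemma span_cocone_index_cls (v w : V) :
  cls v = cls w -> span_cocone_index v = span_cocone_index w.
Proof.
  intro H. apply cls_kernel in H.
  induction H; [apply span_cocone_index_rel; assumption | reflexivity | congruence | congruence].
Qed.

Lemma span_cocone_mor_natural (v w : V) (r : R v w) :
  comp (span_cocone_mor w) (span_map v w r)
  = hcast (tw_fam D Q) (span_obj v) (span_cocone_index_rel v w r) (span_cocone_mor v).
Proof.
  generalize (span_cocone_index_rel v w r).
  destruct v as [a|[b|c]], w as [a'|[b'|c']]; simpl in r; try contradiction; subst;
  intro e; simpl; rewrite ?hcast_id.
  - apply comp_id_r.
  - reflexivity.
  - symmetry. rewrite (hcast_pi _ _ _ _ e (f_equal (fun h => projT1 h a) j_comm)).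
    exact (tw_hom_eq_component D A Q _ _ j_comm a).
  - apply comp_id_r.
  - apply comp_id_r.
Qed.

Definition class_rep (K : Fin.t m) : V :=
  proj1_sig (constructive_indefinite_description _ (cls_surjective K)).

Lemma class_rep_spec (K : Fin.t m) : cls (class_rep K) = K.
Proof. exact (proj2_sig (constructive_indefinite_description _ (cls_surjective K))). Qed.

Definition mediating_index (K : Fin.t m) : Fin.t (tw_n D Q) :=
  span_cocone_index (class_rep K).

Lemma mediating_index_spec (v : V) (K : Fin.t m) :
  cls v = K -> span_cocone_index v = mediating_index K.
Proof. intro pv. apply span_cocone_index_cls. rewrite class_rep_spec. exact pv. Qed.

Definition class_cocone (K : Fin.t m) (j : fibre K) :
  @Hom D (diagram K j) (tw_fam D Q (mediating_index K)) :=
  hcast (tw_fam D Q) (span_obj (proj1_sig j))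
    (mediating_index_spec _ _ (proj2_sig j)) (span_cocone_mor (proj1_sig j)).

Lemma class_cocone_is_cocone (K : Fin.t m) :
  is_cocone (diagram K) (tw_fam D Q (mediating_index K)) (class_cocone K).
Proof.
  intros [v pv] [w pw] r. unfold class_cocone; simpl.
  rewrite hcast_comp, span_cocone_mor_natural, hcast_hcast. apply hcast_pi.
Qed.

Definition mediating_component (K : Fin.t m) :
  @Hom D (cobj K) (tw_fam D Q (mediating_index K)) :=
  proj1_sig (constructive_indefinite_description _
    (proj2 (cleg_colimit K) _ (class_cocone K) (class_cocone_is_cocone K))).

Lemma mediating_component_spec (K : Fin.t m) :
  (forall j, comp (mediating_component K) (cleg K j) = class_cocone K j) /\
  (forall h, (forall j, comp h (cleg K j) = class_cocone K j) -> h = mediating_component K).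
Proof.
  unfold mediating_component. destruct (constructive_indefinite_description _ _) as [h Hh].
  exact Hh.
Qed.

Definition mediating_map : TwHom D pushout_ob Q := existT _ mediating_index mediating_component.

Lemma mediating_map_leg (v : V) (e : mediating_index (cls v) = span_cocone_index v) :
  hcast (tw_fam D Q) (span_obj v) e (comp (mediating_component (cls v)) (class_leg v))
  = span_cocone_mor v.
Proof.
  etransitivity;
    [apply f_equal, (proj1 (mediating_component_spec (cls v)) (exist _ v eq_refl))|].
  unfold class_cocone; simpl. rewrite hcast_hcast. apply hcast_id.
Qed.

Lemma mediating_map_inl : tw_comp D mediating_map pushout_inl = j1.
Proof.
  apply tw_hom_ext; simpl.
  - intro b. symmetry. exact (mediating_index_spec (inr (inl b)) _ eq_refl).
  - intros b e. exact (mediating_map_leg (inr (inl b)) e).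
Qed.

Lemma mediating_map_inr : tw_comp D mediating_map pushout_inr = j2.
Proof.
  apply tw_hom_ext; simpl.
  - intro c. symmetry. exact (mediating_index_spec (inr (inr c)) _ eq_refl).
  - intros c e. exact (mediating_map_leg (inr (inr c)) e).
Qed.

Lemma component_agrees_on_leg (w : TwHom D pushout_ob Q) (K : Fin.t m) (v : V)
  (pv : cls v = K) (e : projT1 w K = mediating_index K)
  (ev : projT1 w (cls v) = span_cocone_index v) :
  hcast (tw_fam D Q) (span_obj v) ev (comp (projT2 w (cls v)) (class_leg v))
  = span_cocone_mor v ->
  comp (hcast (tw_fam D Q) (cobj K) e (projT2 w K)) (cleg K (exist _ v pv))
  = class_cocone K (exist _ v pv).
Proof.
  intro Hv. subst K. rewrite hcast_comp.
  unfold class_cocone; simpl. rewrite <- Hv, hcast_hcast. apply hcast_pi.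
Qed.

Lemma mediating_map_unique (w : TwHom D pushout_ob Q) :
  tw_comp D w pushout_inl = j1 -> tw_comp D w pushout_inr = j2 -> w = mediating_map.
Proof.
  intros H1 H2.
  assert (Hidx : forall v, projT1 w (cls v) = span_cocone_index v).
  { intros [a|[b|c]].
    - rewrite (cls_rel (inl a) (inr (inl (projT1 f a))) eq_refl).
      exact (f_equal (fun h => projT1 h (projT1 f a)) H1).
    - exact (f_equal (fun h => projT1 h b) H1).
    - exact (f_equal (fun h => projT1 h c) H2). }
  assert (Hagree_B : forall K b (pv : cls (inr (inl b)) = K) e,
             comp (hcast (tw_fam D Q) (cobj K) e (projT2 w K)) (cleg K (exist _ _ pv))
             = class_cocone K (exist _ _ pv))
    by (intros; exact (component_agrees_on_leg w _ _ pv e _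
                         (tw_hom_eq_component _ _ _ _ _ H1 b))).
  apply tw_hom_ext; simpl.
  - intro K. rewrite <- (class_rep_spec K) at 1. apply Hidx.
  - intros K e. apply (proj2 (mediating_component_spec K)). intros [[a|[b|c]] pv].
    + (* the leg at [inl a] factors through the leg at [inr (inl (f a))] *)
      assert (pfa : cls (inr (inl (projT1 f a))) = K)
        by (rewrite <- pv; symmetry; apply cls_rel; reflexivity).
      apply (cocone_legs_agree_back (diagram K) _ _ (cleg K) (class_cocone K) _
               (proj1 (cleg_colimit K)) (class_cocone_is_cocone K)
               (exist _ (inl a) pv) (exist _ _ pfa) (eq_refl (projT1 f a))).
      apply Hagree_B.
    + apply Hagree_B.
    + exact (component_agrees_on_leg w _ _ pv e _ (tw_hom_eq_component _ _ _ _ _ H2 c)).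
Qed.

Lemma pushout_universal :
  exists u : TwHom D pushout_ob Q,
    (tw_comp D u pushout_inl = j1 /\ tw_comp D u pushout_inr = j2) /\
    (forall v : TwHom D pushout_ob Q,
        tw_comp D v pushout_inl = j1 -> tw_comp D v pushout_inr = j2 -> v = u).
Proof.
  exists mediating_map.
  split; [split; [apply mediating_map_inl | apply mediating_map_inr]|].
  apply mediating_map_unique.
Qed.

End Universal.
End Pushout.

Theorem mainTheorem5 (D : Category) :
  has_finite_connected_colimits D -> has_pushouts (Tw D).
Proof.
  intros HD A B C f g.
  destruct (finite_quotient _ _ (clos_rst_is_equiv _ (span_rel D A B C f g))
              (span_index_finite D A B C)) as (m & cls & cls_kernel & cls_surjective).
  destruct (colimits_choice _ (fibre_diagram _ _ _ _ D (span_diagram D A B C f g) _ cls))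
    as (cobj & cleg & cleg_colimit).
  { intro K. apply HD.
    - apply fibre_cat_finite, span_index_finite.
    - apply fibre_cat_connected; auto. }
  exists (pushout_ob D m cobj), (pushout_inl D A B C f g m cls cobj cleg),
    (pushout_inr D A B C f g m cls cobj cleg).
  split.
  - apply pushout_comm; assumption.
  - intros Q j1 j2 Hj. apply pushout_universal; assumption.
Qed.
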